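(* Every financial system with payment priorities (as defined in the context, for any number $P\ge 1$ of priority levels) has at least one solution, i.e. there exists $r\in[0,1]^V$ such that for every bank $v\in V$: $r_v=1$ if $a_v(r)\ge l_v(r)$, and $r_v=a_v(r)/l_v(r)$ if $a_v(r)<l_v(r)$.
   Context: A financial system with payment priorities consists of: a finite set $V$ of banks; external assets $e_v\ge 0$ for each $v\in V$; a number $P\ge 1$ of priority levels; and a finite set of contracts, each of which is either a debt contract from a debtor $u$ to a creditor $v\neq u$ with weight $c>0$, or a credit default swap (CDS) from a debtor $u$ to a creditor $v\neq u$ in reference to a bank $w\notin\{u,v\}$ (the reference entity) with weight $c>0$. Every contract has a priority in $\{1,\dots,P\}$ (1 is the highest priority). It is assumed that every bank that is the reference entity of some CDS is the debtor of at least one debt contract of positive weight. Given a recovery rate vector $r\in[0,1]^V$: the liability of a contract $k$ is $l_k(r)=c$ if $k$ is a debt of weight $c$, and $l_k(r)=c\,(1-r_w)$ if $k$ is a CDS of weight $c$ in reference to $w$. For a bank $v$, $l_v(r)$ is the sum of the liabilities of the contracts with debtor $v$; $l_v^{(\rho)}(r)$ is the sum of the liabilities of contracts with debtor $v$ and priority $\rho$; and $l_v^{(\le\rho)}(r)=\sum_{i=1}^{\rho}l_v^{(i)}(r)$ (with $l_v^{(\le 0)}=0$). The payment on a contract $k$ with debtor $v$ and priority $\rho$ is $p_k(r)=l_k(r)\cdot\min\{1,\max\{0,(r_v l_v(r)-l_v^{(\le\rho-1)}(r))/l_v^{(\rho)}(r)\}\}$ (and $p_k(r)=0$ if $l_v^{(\rho)}(r)=0$);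 i.e. the amount $r_v l_v(r)$ paid out by $v$ covers liabilities level by level in order of priority, proportionally to liabilities within a level. The assets of $v$ are $a_v(r)=e_v+\sum_k p_k(r)$, summing over contracts $k$ with creditor $v$. A vector $r\in[0,1]^V$ is a solution (clearing vector) if for every $v\in V$: $r_v=1$ when $a_v(r)\ge l_v(r)$, and $r_v=a_v(r)/l_v(r)$ when $a_v(r)<l_v(r)$. The payoff of $v$ is $q_v(r)=\max\{a_v(r)-l_v(r),0\}$. When $P=1$, payments reduce to $p_k(r)=r_v\,l_k(r)$ (principle of proportionality); this is called the base model. *)

From Stdlib Require Import Reals Lra Lia List Arith.
Open Scope R_scope.

(* Banks are the natural numbers 0 .. n-1 (a finite set V of size n).
   Priority levels are 1 .. P (1 = highest priority). *)

Inductive contract_kind : Type :=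
  | Debt : contract_kind
  | CDS : nat -> contract_kind.   (* CDS in reference to bank w *)

Record contract : Type := mkContract {
  kind : contract_kind;
  debtor : nat;
  creditor : nat;
  weight : R;
  prio : nat
}.

(* A financial system with payment priorities. The finite set of contracts
   is given as a list (distinct list entries are distinct contracts). *)
Record system : Type := mkSystem {
  nbanks : nat;
  ext : nat -> R;
  nprio : nat;
  contracts : list contract
}.

Definition well_formed (FS : system) : Prop :=
  (1 <= nprio FS)%nat /\
  (forall v, (v < nbanks FS)%nat -> 0 <= ext FS v) /\
  (forall k, In k (contracts FS) ->
     (debtor k < nbanks FS)%nat /\ (creditor k < nbanks FS)%nat /\
     debtor k <> creditor k /\ 0 < weight k /\
     (1 <= prio k <= nprio FS)%nat /\
     (forall w, kind k = CDS w ->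
        (w < nbanks FS)%nat /\ w <> debtor k /\ w <> creditor k)) /\
  (forall k w, In k (contracts FS) -> kind k = CDS w ->
     exists k', In k' (contracts FS) /\ kind k' = Debt /\ debtor k' = w /\
                0 < weight k').

Definition sumR {A : Type} (f : A -> R) (l : list A) : R :=
  fold_right (fun x acc => f x + acc) 0 l.

Definition liab (r : nat -> R) (k : contract) : R :=
  match kind k with
  | Debt => weight k
  | CDS w => weight k * (1 - r w)
  end.

Definition liab_bank (FS : system) (r : nat -> R) (v : nat) : R :=
  sumR (liab r) (filter (fun k => Nat.eqb (debtor k) v) (contracts FS)).

Definition liab_prio (FS : system) (r : nat -> R) (v rho : nat) : R :=
  sumR (liab r)
    (filter (fun k => andb (Nat.eqb (debtor k) v) (Nat.eqb (prio k) rho)) (contracts FS)).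

Fixpoint liab_le (FS : system) (r : nat -> R) (v rho : nat) : R :=
  match rho with
  | O => 0
  | Datatypes.S rho' => liab_le FS r v rho' + liab_prio FS r v (Datatypes.S rho')
  end.

Definition payment (FS : system) (r : nat -> R) (k : contract) : R :=
  let v := debtor k in
  let rho := prio k in
  if Req_EM_T (liab_prio FS r v rho) 0 then 0
  else liab r k *
       Rmin 1 (Rmax 0 ((r v * liab_bank FS r v - liab_le FS r v (rho - 1))
                       / liab_prio FS r v rho)).

Definition assets (FS : system) (r : nat -> R) (v : nat) : R :=
  ext FS v + sumR (payment FS r)
                 (filter (fun k => Nat.eqb (creditor k) v) (contracts FS)).

Definition is_solution (FS : system) (r : nat -> R) : Prop :=
  forall v, (v < nbanks FS)%nat ->
    0 <= r v <= 1 /\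
    (assets FS r v >= liab_bank FS r v -> r v = 1) /\
    (assets FS r v < liab_bank FS r v -> r v = assets FS r v / liab_bank FS r v).

(* A clearing vector comes from a fixed point of a continuous self-map of the cube
   [0,1]^n ([clearing_map]), which exists by Brouwer's theorem. Brouwer's theorem is
   derived from Sperner's lemma on the Kuhn triangulation of the grid [0..m]^N: a
   Sperner labelling read off from [F] yields a small simplex whose vertices witness,
   coordinate by coordinate, both [x_i <= F x_i] and [F x_i <= x_i]; this gives
   approximate fixed points, and compactness of the cube turns them into a fixed point.
   Sperner's lemma goes by induction on N: the number of fully labelled simplices has
   the parity of the number of doors (facets labelled exactly [0..N-1]); [flip] pairs
   up the doors inside the grid, and the remaining ones are the fully labelled
   simplices of the face [g_N = m]. *)

From Stdlib Require Import Reals Lra List ClassicalEpsilon Classical.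
From Coquelicot Require Compactness.
From mathcomp Require Import ssreflect ssrfun ssrbool eqtype ssrnat seq zify.

Set Implicit Arguments.
Unset Strict Implicit.
Local Close Scope R_scope.

Lemma even_count_unfixed_involution (T : eqType) (f : T -> T) (P : pred T) (l : seq T) :
  uniq l -> {in l, forall x, f x \in l} -> {in l, involutive f} ->
  {in l, forall x, P (f x) = P x} ->
  ~~ odd (count (fun x => P x && (f x != x)) l).
Proof.
move=> ul fl ffl Pf; rewrite -size_filter.
set l' := filter _ l.
have ul' : uniq l' by rewrite filter_uniq.
have fl' : {in l', forall x, f x \in l'}.
  move=> x; rewrite !mem_filter => /andP[/andP[Px fx] xl].
  by rewrite Pf // Px /= ffl // fl // andbT eq_sym.
have ffl' : {in l', involutive f} by move=> x; rewrite mem_filter => /andP[_ /ffl].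
have nfix : {in l', forall x, f x != x} by move=> x; rewrite mem_filter => /andP[/andP[_ ->]].
clearbody l'; clear -ul' fl' ffl' nfix.
elim: {l'}_.+1 {-2}l' (ltnSn (size l')) ul' fl' ffl' nfix => // n IH [//|x t] /= szt.
case/andP=> xt ut fl' ffl' nfix.
have fxt : f x \in t.
  have := fl' x (mem_head _ _); rewrite inE => /orP[/eqP e|//].
  by have := nfix x (mem_head _ _); rewrite e eqxx.
rewrite negbK (perm_size (perm_to_rem fxt)) /=.
suff : ~~ odd (size (rem (f x) t)) by case: odd.
have remE := rem_filter (f x) ut.
have tS y : y \in rem (f x) t -> y \in x :: t.
  by rewrite remE mem_filter inE => /andP[_ ->]; rewrite orbT.
apply: IH; first by move: szt; rewrite (perm_size (perm_to_rem fxt)) /=; lia.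
- exact: rem_uniq.
- move=> y yr; have := fl' y (tS y yr); rewrite inE => /orP[/eqP e|fyt].
    by move: (yr); rewrite remE mem_filter -e (ffl' y (tS y yr)) /= eqxx.
  rewrite remE mem_filter fyt andbT /=; apply: contraNneq xt => /(congr1 f).
  by rewrite (ffl' y (tS y yr)) (ffl' x (mem_head _ _)) => <-; apply: mem_rem yr.
- by move=> y /tS; apply: ffl'.
- by move=> y /tS; apply: nfix.
Qed.

Lemma perm_iota_map_bij (t u : nat -> nat) N p :
  (forall q, q < N -> t q < N) -> (forall q, q < N -> u q < N) ->
  (forall q, q < N -> u (t q) = q) -> (forall q, q < N -> t (u q) = q) ->
  perm_eq p (iota 0 N) -> perm_eq (map t p) (iota 0 N).
Proof.
move=> tN uN tu ut pP; apply: perm_trans (perm_map t pP) _.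
apply: uniq_perm; rewrite ?iota_uniq //.
  rewrite map_inj_in_uniq ?iota_uniq // => x y.
  rewrite !mem_iota /= !add0n => xN yN txy.
  by rewrite -(tu x xN) txy tu.
move=> x; rewrite mem_iota add0n /=; apply/mapP/idP.
  by case=> y; rewrite mem_iota add0n /= => /tN yN ->.
by move=> xN; exists (u x); rewrite ?mem_iota ?add0n ?uN ?ut.
Qed.

Lemma odd_sumn s : odd (sumn s) = odd (count odd s).
Proof. by elim: s => //= x s IH; rewrite oddD IH; case: (odd x). Qed.

Lemma iotaS_rcons N : iota 0 N.+1 = rcons (iota 0 N) N.
Proof. by rewrite -addn1 iotaD add0n /= cats1. Qed.

Lemma simplex_door_parity N (g : nat -> nat) : (forall j, j <= N -> g j <= N) ->
  odd (count (fun k => perm_eq [seq g j | j <- iota 0 N.+1 & j != k] (iota 0 N))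
             (iota 0 N.+1))
  = perm_eq [seq g j | j <- iota 0 N.+1] (iota 0 N.+1).
Proof.
move=> gN; set I := iota 0 N.+1; set J := iota 0 N; set L := map g I.
have facetE k : k \in I -> perm_eq [seq g j | j <- I & j != k] J = perm_eq L (g k :: J).
  move=> kI; suff H : perm_eq L (g k :: [seq g j | j <- I & j != k]).
    by rewrite (permPl H) perm_cons.
  rewrite /L -map_cons -(rem_filter _ (iota_uniq 0 N.+1)).
  by apply: perm_map; apply: perm_to_rem.
rewrite (eq_in_count facetE) -(count_map g (fun y => perm_eq L (y :: J))) -/L.
set Q := fun y => perm_eq L (y :: J).
have LN y : y \in L -> y <= N.
  by case/mapP=> j; rewrite mem_iota add0n /= => jN ->; apply: gN.
have cJ y : count_mem y J = (y < N).
  by rewrite count_uniq_mem ?iota_uniq // mem_iota add0n.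
have IJ : perm_eq I (N :: J) by rewrite /I iotaS_rcons perm_rcons.
have [/hasP[y yL Qy]|nQ] := boolP (has Q L); last first.
  rewrite (_ : count Q L = 0); last by apply/eqP; rewrite -leqn0 leqNgt -has_count.
  apply/esym/negP => HL; apply/(negP nQ)/hasP; exists N.
    by rewrite (perm_mem HL) mem_iota add0n ltnSn.
  by rewrite /Q (permPl HL).
have eqQ : {in L, Q =1 pred1 y}.
  move=> z zL /=; apply/idP/eqP => [Qz|->//].
  have /permP/(_ (pred1 z)) : perm_eq (y :: J) (z :: J).
    by apply: perm_trans Qz; rewrite perm_sym.
  by rewrite /= eqxx; case: eqP => //= _ /eqP; rewrite eqn_add2r.
rewrite (eq_in_count eqQ) (permP Qy (pred1 y)) /= eqxx cJ.
have [yN|yltN] := eqVneq y N.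
  by rewrite yN ltnn /=; apply/esym; apply: perm_trans Qy _; rewrite yN perm_sym.
have ylt : y < N by have := LN y yL; rewrite leq_eqVlt (negbTE yltN).
rewrite ylt /=; apply/esym/negP => /permP/(_ (pred1 y)).
rewrite (permP Qy (pred1 y)) /= eqxx cJ ylt count_uniq_mem ?iota_uniq //.
by rewrite mem_iota /=; lia.
Qed.
Lemma all_mkseq (P : pred nat) f N : all P (mkseq f N) = all (P \o f) (iota 0 N).
Proof. by rewrite all_map. Qed.

Lemma eq_in_mkseq N (f g : nat -> nat) :
  (forall i, i < N -> f i = g i) -> mkseq f N = mkseq g N.
Proof. by move=> fg; apply/eq_in_map => i; rewrite mem_iota add0n; apply: fg. Qed.

Lemma nth_eq_index (p : seq nat) i q : uniq p -> i < size p -> q \in p ->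
  (nth 0 p i == q) = (i == index q p).
Proof. by move=> up ip qp; apply/eqP/eqP => [<-|->]; rewrite ?index_uniq ?nth_index. Qed.

Lemma rcons_take_nth (s : seq nat) N : size s = N.+1 -> s = rcons (take N s) (nth 0 s N).
Proof.
move=> ss; rewrite -cats1 -{1}(cat_take_drop N s).
by rewrite (drop_nth 0) ?ss // drop_oversize ?ss.
Qed.

Lemma map_facet_first (f : nat -> nat) N :
  [seq f j | j <- iota 0 N.+1 & j != 0] = [seq f j.+1 | j <- iota 0 N].
Proof.
rewrite /= (_ : [seq j <- iota 1 N | j != 0] = iota 1 N).
  by rewrite (iotaDl 1 0) -map_comp; apply/eq_map => j /=; rewrite add1n.
by apply/all_filterP/allP => j; rewrite mem_iota; lia.
Qed.

Lemma map_facet_last (f : nat -> nat) N :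
  [seq f j | j <- iota 0 N.+1 & j != N] = [seq f j | j <- iota 0 N].
Proof.
rewrite iotaS_rcons filter_rcons eqxx /=.
by congr map; apply/all_filterP/allP => j; rewrite mem_iota; lia.
Qed.

Definition orders N := permutations (iota 0 N).

Lemma mem_orders N p : (p \in orders N) = perm_eq p (iota 0 N).
Proof. by rewrite mem_permutations. Qed.

Lemma ordersP N p : p \in orders N ->
  [/\ size p = N, uniq p & forall q, (q \in p) = (q < N)].
Proof.
rewrite mem_orders => pN; split; first by rewrite (perm_size pN) size_iota.
  by rewrite (perm_uniq pN) iota_uniq.
by move=> q; rewrite (perm_mem pN) mem_iota add0n.
Qed.

Lemma nth_order_lt N p i : p \in orders N -> i < N -> nth 0 p i < N.
Proof. by case/ordersP => sp _ mp iN; rewrite -mp mem_nth ?sp. Qed.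

Lemma index_order_lt N p q : p \in orders N -> q < N -> index q p < N.
Proof. by case/ordersP => sp _ mp qN; rewrite -{1}sp index_mem mp. Qed.

Lemma nth_index_order N p q : p \in orders N -> q < N -> nth 0 p (index q p) = q.
Proof. by case/ordersP => _ _ mp qN; rewrite nth_index ?mp. Qed.

Section OrderMap.
Variables (N : nat) (t u : nat -> nat).
Hypotheses (tN : forall q, q < N -> t q < N) (uN : forall q, q < N -> u q < N).
Hypotheses (tK : forall q, q < N -> u (t q) = q) (uK : forall q, q < N -> t (u q) = q).

Lemma map_order p : p \in orders N -> map t p \in orders N.
Proof. by rewrite !mem_orders; apply: perm_iota_map_bij tN uN tK uK. Qed.

Lemma index_map_order p q : p \in orders N -> q < N -> index (t q) (map t p) = index q p.
Proof.
move=> pp qN; have [sp _ _] := ordersP pp; have [_ utp _] := ordersP (map_order pp).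
have iqN := index_order_lt pp qN.
by rewrite -[in t q](nth_index_order pp qN) -(nth_map 0 0 t) ?index_uniq ?size_map ?sp.
Qed.

Lemma map_orderK p : p \in orders N -> map u (map t p) = p.
Proof.
case/ordersP => _ _ mp; rewrite -map_comp map_id_in // => q.
by rewrite mp; apply: tK.
Qed.

End OrderMap.

Definition rot_down N q := if q == 0 then N.-1 else q.-1.
Definition rot_up N q := if q == N.-1 then 0 else q.+1.
Definition swap_step k q := if q == k.-1 then k else if q == k then k.-1 else q.

Lemma rot_down_lt N q : q < N -> rot_down N q < N.
Proof. by rewrite /rot_down; case: eqP; lia. Qed.

Lemma rot_up_lt N q : q < N -> rot_up N q < N.
Proof. by rewrite /rot_up; case: eqP; lia. Qed.

Lemma rot_downK N q : q < N -> rot_up N (rot_down N q) = q.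
Proof.
rewrite /rot_down /rot_up => qN; case: (q =P 0) => [->|q0]; first by rewrite eqxx.
by rewrite ifN_eq; [lia|apply/eqP; lia].
Qed.

Lemma rot_upK N q : q < N -> rot_down N (rot_up N q) = q.
Proof. by rewrite /rot_down /rot_up => qN; case: (q =P N.-1) => [->|]; rewrite ?eqxx. Qed.

Lemma swap_step_lt N k q : 0 < k < N -> q < N -> swap_step k q < N.
Proof. by rewrite /swap_step; case: eqP; [lia|case: eqP; lia]. Qed.

Lemma swap_stepK k q : 0 < k -> swap_step k (swap_step k q) = q.
Proof.
move=> k0; rewrite /swap_step.
case: (q =P k.-1) => [->|h1]; first by rewrite ifN_eq ?eqxx //; apply/eqP; lia.
by case: (q =P k) => [->|h2]; rewrite ?eqxx // ifN_eq ?ifN_eq //; apply/eqP.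
Qed.

(** * Kuhn triangulation of the grid [0..m]^N *)

(* A Kuhn simplex [(b, p)] is given by
   the base corner [b] of a unit cell and an order [p] of the coordinates; its
   vertex [j <= N] raises by one every coordinate [i] with [p_i < j]. A facet
   [((b, p), k)] is a simplex with its vertex [k] omitted. *)

Fixpoint cube_cells (N m : nat) : seq (seq nat) :=
  if N is N'.+1 then [seq rcons b i | b <- cube_cells N' m, i <- iota 0 m] else [:: [::]].

Definition on_grid N m (g : seq nat) := (size g == N) && all (fun x => x <= m) g.

Definition kuhn_vertex N (b p : seq nat) j := mkseq (fun i => nth 0 b i + (nth 0 p i < j)) N.

Definition kuhn_simplices N m := [seq (b, p) | b <- cube_cells N m, p <- orders N].

Definition kuhn_facets N m := [seq (s, k) | s <- kuhn_simplices N m, k <- iota 0 N.+1].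

Lemma mem_cube_cells N m b :
  (b \in cube_cells N m) = (size b == N) && all (fun x => x < m) b.
Proof.
elim: N b => [|N IH] b /=; first by rewrite inE; case: b.
case/lastP: b => [|b x].
  by apply/negP => /allpairsP[[y z] [_ _ /=]] /eqP; rewrite eq_sym -size_eq0 size_rcons.
rewrite size_rcons all_rcons eqSS; apply/allpairsP/idP.
  case=> [[y z] [/= yc zi /eqP]]; rewrite eqseq_rcons => /andP[/eqP -> /eqP ->].
  by move: yc zi; rewrite IH mem_iota add0n /= => /andP[-> ->] ->.
case/andP=> sb /andP[xm ab]; exists (b, x) => /=.
by rewrite IH sb ab mem_iota add0n.
Qed.

Lemma uniq_cube_cells N m : uniq (cube_cells N m).
Proof.
elim: N => [//|N IH] /=; apply: allpairs_uniq; rewrite ?iota_uniq //.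
by move=> [a b] [c d] _ _ /= /eqP; rewrite eqseq_rcons => /andP[/eqP -> /eqP ->].
Qed.

Lemma cube_cellsP N m b :
  b \in cube_cells N m -> size b = N /\ forall i, i < N -> nth 0 b i < m.
Proof.
rewrite mem_cube_cells => /andP[/eqP sb /allP ab]; split => // i iN.
by apply: ab; rewrite mem_nth ?sb.
Qed.

Lemma mkseq_cube_cells N m f : (forall i, i < N -> f i < m) -> mkseq f N \in cube_cells N m.
Proof.
move=> fm; rewrite mem_cube_cells size_mkseq eqxx all_mkseq.
by apply/allP => i; rewrite mem_iota add0n => /fm.
Qed.

Lemma nth_kuhn_vertex N b p j i :
  i < N -> nth 0 (kuhn_vertex N b p j) i = nth 0 b i + (nth 0 p i < j).
Proof. exact: nth_mkseq. Qed.

Lemma kuhn_vertex_on_grid N m b p j :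
  b \in cube_cells N m -> on_grid N m (kuhn_vertex N b p j).
Proof.
case/cube_cellsP => _ bm; rewrite /on_grid size_mkseq eqxx all_mkseq.
by apply/allP => i; rewrite mem_iota add0n /= => /bm; case: (_ < j); lia.
Qed.

Lemma uniq_kuhn_simplices N m : uniq (kuhn_simplices N m).
Proof.
apply: allpairs_uniq; [exact: uniq_cube_cells|exact: permutations_uniq|].
by move=> [a b] [c d] _ _ /= [-> ->].
Qed.

Lemma uniq_kuhn_facets N m : uniq (kuhn_facets N m).
Proof.
apply: allpairs_uniq; [exact: uniq_kuhn_simplices|exact: iota_uniq|].
by move=> [a b] [c d] _ _ /= [-> ->].
Qed.

Lemma mem_kuhn_simplices N m b p :
  ((b, p) \in kuhn_simplices N m) = (b \in cube_cells N m) && (p \in orders N).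
Proof.
apply/allpairsP/andP => [[[y z] [/= yc zp [-> ->]]] //|[bc pp]].
by exists (b, p).
Qed.

Lemma mem_kuhn_facets N m b p k :
  (((b, p), k) \in kuhn_facets N m) = [&& b \in cube_cells N m, p \in orders N & k <= N].
Proof.
apply/allpairsP/and3P.
  case=> [[[y z] w] []]; cbn [fst snd].
  by rewrite mem_kuhn_simplices mem_iota add0n ltnS => /andP[yc zp] wN [-> -> ->].
case=> bc pp kN; exists ((b, p), k).
by rewrite mem_kuhn_simplices bc pp mem_iota add0n ltnS.
Qed.

Definition incr_at N (b : seq nat) i := mkseq (fun j => nth 0 b j + (j == i)) N.
Definition decr_at N (b : seq nat) i := mkseq (fun j => nth 0 b j - (j == i)) N.

Lemma nth_incr_at N b i j : j < N -> nth 0 (incr_at N b i) j = nth 0 b j + (j == i).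
Proof. exact: nth_mkseq. Qed.

Lemma nth_decr_at N b i j : j < N -> nth 0 (decr_at N b i) j = nth 0 b j - (j == i).
Proof. exact: nth_mkseq. Qed.

Lemma incr_atK N b i : size b = N -> decr_at N (incr_at N b i) i = b.
Proof.
move=> sb; rewrite -[RHS](mkseq_nth 0) sb; apply: eq_in_mkseq => j jN.
by rewrite nth_incr_at ?addnK.
Qed.

Lemma decr_atK N b i : size b = N -> 0 < nth 0 b i -> incr_at N (decr_at N b i) i = b.
Proof.
move=> sb bi; rewrite -[RHS](mkseq_nth 0) sb; apply: eq_in_mkseq => j jN.
by rewrite nth_decr_at //; case: eqP => [->|]; lia.
Qed.

(* [flip] sends a facet to the same facet seen from the other Kuhn simplex containing
   it; it fixes the facets lying on the boundary of the grid. *)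
Definition flip N m (x : (seq nat * seq nat) * nat) :=
  let: ((b, p), k) := x in
  if k == 0 then
    if (nth 0 b (index 0 p)).+1 < m then ((incr_at N b (index 0 p), map (rot_down N) p), N)
    else x
  else if k == N then
    if 0 < nth 0 b (index N.-1 p) then ((decr_at N b (index N.-1 p), map (rot_up N) p), 0)
    else x
  else ((b, map (swap_step k) p), k).
Arguments flip : simpl never.

Section Flip.
Variables N m : nat.
Hypothesis N0 : 0 < N.

Let rot_downT := map_order (@rot_down_lt N) (@rot_up_lt N) (@rot_downK N) (@rot_upK N).
Let rot_upT := map_order (@rot_up_lt N) (@rot_down_lt N) (@rot_upK N) (@rot_downK N).
Let index_rot_down :=
  index_map_order (@rot_down_lt N) (@rot_up_lt N) (@rot_downK N) (@rot_upK N).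
Let index_rot_up := index_map_order (@rot_up_lt N) (@rot_down_lt N) (@rot_upK N) (@rot_downK N).

Lemma flip_kuhn_facets x : x \in kuhn_facets N m -> flip N m x \in kuhn_facets N m.
Proof.
case: x => [[b p] k]; rewrite mem_kuhn_facets => /and3P[bc pp kN].
have [sb bm] := cube_cellsP bc.
rewrite /flip; case: eqP => [k0|k0].
  case: ifP => bi; last by rewrite mem_kuhn_facets bc pp kN.
  rewrite mem_kuhn_facets leqnn rot_downT // !andbT.
  apply: mkseq_cube_cells => i iN.
  by case: eqP => [->|_]; rewrite ?addn1 ?addn0 ?bm.
case: eqP => [kN'|kN'].
  case: ifP => bi; last by rewrite mem_kuhn_facets bc pp kN.
  rewrite mem_kuhn_facets leq0n rot_upT // !andbT.
  by apply: mkseq_cube_cells => i iN; have := bm i iN; lia.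
have kN2 : 0 < k < N by lia.
rewrite mem_kuhn_facets bc kN andbT (@map_order N _ (swap_step k)) // => q qN;
  by rewrite ?swap_stepK ?swap_step_lt //; lia.
Qed.

Lemma flipK x : x \in kuhn_facets N m -> flip N m (flip N m x) = x.
Proof.
case: x => [[b p] k]; rewrite mem_kuhn_facets => /and3P[bc pp kN].
have [sb bm] := cube_cellsP bc.
case: (k =P 0) => [->|k0].
  rewrite /flip eqxx; case: ifP => bi; last by rewrite eqxx bi.
  rewrite ifN_eq ?eqxx -?lt0n // (index_rot_down pp N0).
  rewrite nth_incr_at ?(index_order_lt pp) // eqxx addn1 /=.
  by rewrite incr_atK // (map_orderK (@rot_downK N)).
case: (k =P N) => [->|kN'].
  rewrite /flip ifN_eq -?lt0n // eqxx; case: ifP => bi; last by rewrite ifN_eq -?lt0n // eqxx bi.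
  have i1N : index N.-1 p < N by apply: index_order_lt; lia.
  have -> : index 0 (map (rot_up N) p) = index N.-1 p.
    have <- : rot_up N N.-1 = 0 by rewrite /rot_up eqxx.
    by apply: index_rot_up; last lia.
  rewrite eqxx nth_decr_at // eqxx (_ : _.+1 < m); last by have := bm _ i1N; lia.
  by rewrite decr_atK // (map_orderK (@rot_upK N)).
rewrite /flip !ifN_eq; try exact/eqP.
by rewrite -map_comp map_id_in // => q _ /=; apply: swap_stepK; lia.
Qed.

Lemma flip_fixed b p k : ((b, p), k) \in kuhn_facets N m -> flip N m ((b, p), k) = ((b, p), k) ->
  (k = 0 /\ m <= (nth 0 b (index 0 p)).+1) \/ (k = N /\ nth 0 b (index N.-1 p) = 0).
Proof.
rewrite mem_kuhn_facets /flip => /and3P[bc pp kN].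
case: eqP => [k0|k0].
  by case: ifP => [_ [_ _]|/negbT]; [lia|rewrite -leqNgt; left].
case: eqP => [kN'|kN'].
  by case: ifP => [_ [_ _]|/negbT]; [lia|right; split => //; lia].
have [_ _ mp] := ordersP pp; have km : k.-1 \in p by rewrite mp; lia.
case=> /(congr1 (nth 0 ^~ (index k.-1 p))).
by rewrite (nth_map 0) ?index_mem // nth_index // /swap_step eqxx; lia.
Qed.

Lemma kuhn_vertex_swap_step b p k j : 0 < k < N -> size p = N -> j != k ->
  kuhn_vertex N b (map (swap_step k) p) j = kuhn_vertex N b p j.
Proof.
move=> kN sp jk; apply: eq_in_mkseq => i iN.
rewrite (nth_map 0) ?sp // /swap_step; congr (_ + nat_of_bool _).
by case: eqP => ?; [|case: eqP => ?]; move: jk => /eqP; lia.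
Qed.

Lemma kuhn_vertex_flip_first b p j : p \in orders N -> j < N ->
  kuhn_vertex N (incr_at N b (index 0 p)) (map (rot_down N) p) j = kuhn_vertex N b p j.+1.
Proof.
move=> pp jN; have [sp up mp] := ordersP pp.
apply: eq_in_mkseq => i iN; rewrite nth_incr_at // (nth_map 0) ?sp // /rot_down.
have -> : (nth 0 p i == 0) = (i == index 0 p) by rewrite nth_eq_index ?sp ?mp.
case: (i =P index 0 p) => [->|ne]; first by rewrite (nth_index_order pp); lia.
have : nth 0 p i != 0 by rewrite nth_eq_index ?sp ?mp //; apply/eqP.
lia.
Qed.

Lemma kuhn_vertex_flip_last b p j : p \in orders N -> j < N -> 0 < nth 0 b (index N.-1 p) ->
  kuhn_vertex N (decr_at N b (index N.-1 p)) (map (rot_up N) p) j.+1 = kuhn_vertex N b p j.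
Proof.
move=> pp jN bpos; have [sp up mp] := ordersP pp.
apply: eq_in_mkseq => i iN; rewrite nth_decr_at // (nth_map 0) ?sp // /rot_up.
have e : (nth 0 p i == N.-1) = (i == index N.-1 p) by rewrite nth_eq_index ?sp ?mp //; lia.
rewrite e; case: (i =P index N.-1 p) => [ie|ine].
  by rewrite ie (nth_index_order pp) in bpos *; lia.
have : nth 0 p i != N.-1 by rewrite e; apply/eqP.
by have := nth_order_lt pp iN; lia.
Qed.

Variable lab : seq nat -> nat.

Definition door (x : (seq nat * seq nat) * nat) :=
  perm_eq [seq lab (kuhn_vertex N x.1.1 x.1.2 j) | j <- iota 0 N.+1 & j != x.2] (iota 0 N).

Lemma door_flip x : x \in kuhn_facets N m -> door (flip N m x) = door x.
Proof.
case: x => [[b p] k]; rewrite mem_kuhn_facets => /and3P[bc pp kN].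
have [sp _ _] := ordersP pp.
rewrite /door /flip; case: eqP => [->|k0].
  case: ifP => // _ /=; rewrite map_facet_last map_facet_first.
  congr perm_eq; apply/eq_in_map => j.
  by rewrite mem_iota => /andP[_ jN]; rewrite kuhn_vertex_flip_first.
case: eqP => [->|kN'].
  case: ifP => // bi /=; rewrite map_facet_last map_facet_first.
  congr perm_eq; apply/eq_in_map => j.
  by rewrite mem_iota => /andP[_ jN]; rewrite kuhn_vertex_flip_last.
congr perm_eq; apply/eq_in_map => j; rewrite mem_filter => /andP[jk _].
by rewrite kuhn_vertex_swap_step //; lia.
Qed.

End Flip.

(** * Sperner's lemma *)

Definition fully_labelled N (lab : seq nat -> nat) (s : seq nat * seq nat) :=
  perm_eq [seq lab (kuhn_vertex N s.1 s.2 j) | j <- iota 0 N.+1] (iota 0 N.+1).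

Lemma odd_count_doors_fixed N m lab : 0 < N ->
  odd (count (door N lab) (kuhn_facets N m)) =
  odd (count (fun x => door N lab x && (flip N m x == x)) (kuhn_facets N m)).
Proof.
move=> N0; set F := fun x => flip N m x == x.
rewrite -size_filter -(count_predC F) !count_filter oddD.
have /negbTE -> : ~~ odd (count (predI (predC F) (door N lab)) (kuhn_facets N m)).
  rewrite (eq_count (a2 := fun x => door N lab x && (flip N m x != x))); last first.
    by move=> x; rewrite /= andbC.
  apply: even_count_unfixed_involution; rewrite ?uniq_kuhn_facets //.
  - by move=> x; apply: flip_kuhn_facets.
  - by move=> x; apply: flipK.
  - by move=> x; apply: door_flip.
by rewrite addbF; congr odd; apply: eq_count => x; rewrite /= andbC.
Qed.

Lemma odd_count_doors_fully_labelled N m lab : (forall g, on_grid N m g -> lab g <= N) ->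
  odd (count (door N lab) (kuhn_facets N m)) =
  odd (count (fully_labelled N lab) (kuhn_simplices N m)).
Proof.
move=> labN.
have -> : count (door N lab) (kuhn_facets N m) =
    sumn [seq count (fun k => door N lab (s, k)) (iota 0 N.+1) | s <- kuhn_simplices N m].
  rewrite /kuhn_facets; elim: (kuhn_simplices N m) => [//|s ss IH].
  by rewrite allpairs_cons count_cat count_map IH.
rewrite odd_sumn count_map; congr odd; apply: eq_in_count => -[b p].
rewrite mem_kuhn_simplices => /andP[bc _]; rewrite /preim /door /fully_labelled /=.
apply: (simplex_door_parity (g := fun j => lab (kuhn_vertex N b p j))) => j _.
exact/labN/kuhn_vertex_on_grid.
Qed.

Definition sperner_labelling N m (lab : seq nat -> nat) :=
  [/\ forall g, on_grid N m g -> lab g <= N,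
      forall g i, on_grid N m g -> i < N -> nth 0 g i = 0 -> lab g != i &
      forall g i, on_grid N m g -> i < N -> nth 0 g i = m -> lab g <= i].

Section Boundary.
Variables (N m : nat) (lab : seq nat -> nat).
Hypotheses (N0 : 0 < N) (labS : sperner_labelling N m lab).

Lemma no_door_last_boundary b p : ((b, p), N) \in kuhn_facets N m ->
  nth 0 b (index N.-1 p) = 0 -> ~~ door N lab ((b, p), N).
Proof.
case: labS => _ lab0 _; rewrite mem_kuhn_facets => /and3P[bc pp _] b0.
apply/negP; rewrite /door /= map_facet_last => /perm_mem doorE.
have i1N : index N.-1 p < N by apply: index_order_lt pp _; lia.
have : index N.-1 p \in iota 0 N by rewrite mem_iota.
rewrite -doorE => /mapP[j]; rewrite mem_iota add0n /= => jN /esym/eqP.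
apply/negP; apply: lab0 => //; first exact: kuhn_vertex_on_grid.
by rewrite nth_kuhn_vertex // b0 (nth_index_order pp); lia.
Qed.

Lemma door_first_boundary b p : ((b, p), 0) \in kuhn_facets N m ->
  m <= (nth 0 b (index 0 p)).+1 -> door N lab ((b, p), 0) -> index 0 p = N.-1.
Proof.
case: labS => _ _ labm; rewrite mem_kuhn_facets => /and3P[bc pp _] bm.
have [_ bmm] := cube_cellsP bc.
rewrite /door /= map_facet_first => /perm_mem doorE.
have i0N : index 0 p < N by apply: index_order_lt pp _.
have : N.-1 \in iota 0 N by rewrite mem_iota; lia.
rewrite -doorE => /mapP[j]; rewrite mem_iota add0n /= => jN e.
have := labm (kuhn_vertex N b p j.+1) (index 0 p) (kuhn_vertex_on_grid _ _ bc) i0N.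
rewrite nth_kuhn_vertex // (nth_index_order pp) // -e.
by have := bmm _ i0N; lia.
Qed.

End Boundary.

(* The face [g_N = m] of the grid [0..m]^(N+1) carries the Kuhn triangulation of
   [0..m]^N; [top_facet m s] is the facet in that face of the simplex above [s]. *)
Definition top_facet m (s : seq nat * seq nat) :=
  ((rcons s.1 m.-1, rcons (map succn s.2) 0), 0).
Arguments top_facet : simpl never.

Lemma top_facet_inj m : injective (top_facet m).
Proof.
move=> [a b] [c d] [/(@rcons_injl nat) -> /(@rcons_injl nat)].
by move/(inj_map succn_inj) ->.
Qed.

Lemma top_order N p : (rcons (map succn p) 0 \in orders N.+1) = (p \in orders N).
Proof.
rewrite !mem_orders perm_rcons /= perm_cons (iotaDl 1 0).
rewrite (eq_map (g := addn 1) (fun x => esym (add1n x))).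
by apply/idP/idP => [|/(perm_map (addn 1))//]; apply: perm_map_inj; apply: addnI.
Qed.

Lemma index_top_order N p : size p = N -> index 0 (rcons (map succn p) 0) = N.
Proof.
move=> sp; rewrite -cats1 index_cat size_map sp /= addn0.
by rewrite ifN //; apply/mapP => -[].
Qed.

Lemma kuhn_vertex_top_facet N m b p j : 0 < m -> size b = N -> size p = N ->
  kuhn_vertex N.+1 (rcons b m.-1) (rcons (map succn p) 0) j.+1 = rcons (kuhn_vertex N b p j) m.
Proof.
move=> m0 sb sp; rewrite /kuhn_vertex mkseqS !nth_rcons sb size_map sp ltnn eqxx /=.
congr rcons; last lia.
apply: eq_in_mkseq => i iN; rewrite !nth_rcons sb size_map sp iN (nth_map 0) ?sp //.
Qed.

Section TopFace.
Variables (N m : nat) (lab : seq nat -> nat).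
Hypotheses (m0 : 0 < m) (labS : sperner_labelling N.+1 m lab).

Let top_lab g := lab (rcons g m).

Lemma sperner_labelling_top : sperner_labelling N m top_lab.
Proof.
case: labS => labN lab0 labm.
have gr g : on_grid N m g -> on_grid N.+1 m (rcons g m).
  by rewrite /on_grid size_rcons all_rcons eqSS leqnn.
have gs g : on_grid N m g -> size g = N by case/andP=> /eqP.
split=> [g gg|g i gg iN gi|g i gg iN gi].
- by apply: labm; rewrite ?gr // nth_rcons gs // ltnn eqxx.
- by apply: lab0; rewrite ?gr // ?nth_rcons ?gs ?iN //; lia.
- by apply: labm; rewrite ?gr // ?nth_rcons ?gs ?iN //; lia.
Qed.

Lemma top_facet_kuhn_facets s :
  s \in kuhn_simplices N m -> top_facet m s \in kuhn_facets N.+1 m.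
Proof.
case: s => b p; rewrite mem_kuhn_simplices => /andP[bc pp].
rewrite mem_kuhn_facets top_order pp !andbT.
move: bc; rewrite !mem_cube_cells size_rcons all_rcons eqSS => /andP[-> ->].
by rewrite andbT; lia.
Qed.

Lemma flip_top_facet s :
  s \in kuhn_simplices N m -> flip N.+1 m (top_facet m s) = top_facet m s.
Proof.
case: s => b p; rewrite mem_kuhn_simplices => /andP[bc pp].
have [sb _] := cube_cellsP bc; have [sp _ _] := ordersP pp.
rewrite /flip /top_facet /= (index_top_order sp) nth_rcons sb ltnn eqxx.
by rewrite ifF //; apply/negbTE; rewrite -leqNgt; lia.
Qed.

Lemma door_top_facet s : s \in kuhn_simplices N m ->
  door N.+1 lab (top_facet m s) = fully_labelled N top_lab s.
Proof.
case: s => b p; rewrite mem_kuhn_simplices => /andP[bc pp].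
have [sb _] := cube_cellsP bc; have [sp _ _] := ordersP pp.
rewrite /door /fully_labelled /top_facet; cbn [fst snd]; rewrite map_facet_first.
by congr perm_eq; apply: eq_map => j; rewrite kuhn_vertex_top_facet.
Qed.

(* The labelling rules out doors on the other boundary facets. *)
Lemma fixed_door_top_facet x : x \in kuhn_facets N.+1 m -> door N.+1 lab x ->
  flip N.+1 m x = x -> exists2 s, s \in kuhn_simplices N m & x = top_facet m s.
Proof.
case: x => [[b p] k] xT dx /(flip_fixed (ltn0Sn N) xT) [[k0 bm]|[kN b0]]; last first.
  move: xT dx; rewrite kN => xT dx.
  by have := no_door_last_boundary (ltn0Sn N) labS xT b0; rewrite dx.
move: xT dx; rewrite k0 => xT dx.
have i0 : index 0 p = N := door_first_boundary (ltn0Sn N) labS xT bm dx.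
move: xT; rewrite mem_kuhn_facets => /and3P[bc pp _].
have [sb bmm] := cube_cellsP bc; have [sp up mp] := ordersP pp.
have eb : b = rcons (take N b) m.-1.
  rewrite {1}(rcons_take_nth sb); congr rcons.
  by have := bmm N (ltnSn N); move: bm; rewrite i0; lia.
have ep0 : p = rcons (take N p) 0.
  by rewrite {1}(rcons_take_nth sp); congr rcons; rewrite -{1}i0 (nth_index_order pp).
have nz : 0 \notin take N p by move: up; rewrite {1}ep0 rcons_uniq => /andP[].
have ep : take N p = map succn (map predn (take N p)).
  rewrite -map_comp map_id_in // => q qt /=; apply: prednK; rewrite lt0n.
  by apply: contraNneq nz => <-.
exists (take N b, map predn (take N p)); last by rewrite /top_facet /= -ep -ep0 -eb.
rewrite mem_kuhn_simplices -top_order -ep -ep0 pp andbT.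
rewrite mem_cube_cells size_take sb ltnSn eqxx /=.
by apply/allP => q /mem_take qb; move: bc; rewrite mem_cube_cells => /andP[_ /allP]; apply.
Qed.

Lemma count_fixed_doors :
  count (fun x => door N.+1 lab x && (flip N.+1 m x == x)) (kuhn_facets N.+1 m)
  = count (fully_labelled N top_lab) (kuhn_simplices N m).
Proof.
set P := fun x => _ && _.
have -> : count (fully_labelled N top_lab) (kuhn_simplices N m)
    = count P (map (top_facet m) (kuhn_simplices N m)).
  rewrite count_map; apply: eq_in_count => s sS.
  by rewrite /preim /P /= door_top_facet // flip_top_facet // eqxx andbT.
rewrite -!size_filter; apply/perm_size/uniq_perm.
- by rewrite filter_uniq // uniq_kuhn_facets.
- by rewrite filter_uniq // map_inj_uniq ?uniq_kuhn_simplices //; apply: top_facet_inj.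
move=> x; rewrite !mem_filter; apply/andP/andP => [[Px xT]|[Px /mapP[s sS xE]]].
  split => //; move: Px; rewrite /P => /andP[dx /eqP fx].
  by have [s sS ->] := fixed_door_top_facet xT dx fx; apply: map_f.
by rewrite xE in Px *; split => //; apply: top_facet_kuhn_facets.
Qed.

End TopFace.

Theorem odd_count_fully_labelled N m lab : 0 < m -> sperner_labelling N m lab ->
  odd (count (fully_labelled N lab) (kuhn_simplices N m)).
Proof.
move=> m0; elim: N lab => [|N IH] lab labS.
  have /(_ [::] isT) : forall g, on_grid 0 m g -> lab g <= 0 by case: labS.
  by rewrite leqn0 /kuhn_simplices /fully_labelled /= /kuhn_vertex /= => /eqP ->.
have [labN _ _] := labS.
rewrite -odd_count_doors_fully_labelled // odd_count_doors_fixed // count_fixed_doors //.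
exact/IH/sperner_labelling_top.
Qed.

Theorem sperner N m lab : 0 < m -> sperner_labelling N m lab ->
  exists b p, [/\ b \in cube_cells N m, p \in orders N &
    forall l, l <= N -> exists2 j, j <= N & lab (kuhn_vertex N b p j) = l].
Proof.
move=> m0 labS; have : has (fully_labelled N lab) (kuhn_simplices N m).
  by rewrite has_count lt0n; apply: contraTneq (odd_count_fully_labelled m0 labS) => ->.
case/hasP => -[b p]; rewrite mem_kuhn_simplices => /andP[bc pp] fullS.
exists b, p; split => // l lN.
have : l \in iota 0 N.+1 by rewrite mem_iota.
rewrite -(perm_mem fullS) => /mapP[j]; rewrite mem_iota add0n ltnS => jN ->.
by exists j.
Qed.

(** * Brouwer's fixed point theorem for the cube [0,1]^N *)

Local Open Scope R_scope.

Definition box N (x : nat -> R) := forall i, (i < N)%N -> 0 <= x i <= 1.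

Definition close N d (x y : nat -> R) := forall i, (i < N)%N -> Rabs (x i - y i) < d.

Definition box_continuous_at N (g : (nat -> R) -> R) x :=
  forall eps, 0 < eps -> exists2 d, 0 < d &
    forall y, box N y -> close N d x y -> Rabs (g x - g y) < eps.

Definition box_continuous N (F : (nat -> R) -> nat -> R) :=
  forall i, (i < N)%N -> forall x, box N x -> box_continuous_at N (fun y => F y i) x.

Lemma close_le N d1 d2 x y : d1 <= d2 -> close N d1 x y -> close N d2 x y.
Proof. by move=> d12 cxy i iN; have := cxy i iN; lra. Qed.

Lemma close_sym N d x y : close N d x y -> close N d y x.
Proof. by move=> cxy i iN; rewrite Rabs_minus_sym; apply: cxy. Qed.

Fixpoint tuple_of_fun (n : nat) (x : nat -> R) : Compactness.Tn n R :=
  if n is n'.+1 then (x 0%N, @tuple_of_fun n' (fun i => x i.+1)) else tt.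

Fixpoint fun_of_tuple (n : nat) : Compactness.Tn n R -> nat -> R :=
  match n return Compactness.Tn n R -> nat -> R with
  | 0%N => fun _ _ => 0
  | n'.+1 => fun (t : R * Compactness.Tn n' R) i =>
      if i is i'.+1 then @fun_of_tuple n' t.2 i' else t.1
  end.

Arguments tuple_of_fun : clear implicits.
Arguments fun_of_tuple : clear implicits.

Lemma tuple_of_funK n x i : (i < n)%N -> fun_of_tuple n (tuple_of_fun n x) i = x i.
Proof. by elim: n x i => [|n IH] x [|i] //= iN; rewrite IH. Qed.

Lemma bounded_nE n t :
  Compactness.bounded_n n (tuple_of_fun n (fun _ => 0)) (tuple_of_fun n (fun _ => 1)) t
  <-> box n (fun_of_tuple n t).
Proof.
elim: n t => [|n IH] /= t; first by split => // _ i.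
case: t => a t /=; rewrite IH; split => [[a01 tB] [|i] //= iN|tB].
  exact: tB.
by split; [apply: (tB 0%N)|move=> i iN; apply: (tB i.+1)].
Qed.

Lemma close_nE n d x t :
  Compactness.close_n n d x t <-> close n d (fun_of_tuple n x) (fun_of_tuple n t).
Proof.
elim: n x t => [|n IH] /= x t; first by split => // _ i.
case: x => a x; case: t => b t /=; rewrite IH; split => [[ab xt] [|i] //= iN|xt].
  exact: xt.
by split; [apply: (xt 0%N)|move=> i iN; apply: (xt i.+1)].
Qed.

(* Compactness of the cube, in gauge form: a positive gauge [g] admits a uniform
   [d > 0] such that every point of the cube lies within [g t] of a point [t] with
   [d <= g t]; the existence is only doubly negated. *)
Lemma box_gauge N (g : (nat -> R) -> R) : (forall x, 0 < g x) ->
  exists2 d, 0 < d & forall y, box N y ->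
    ~ ~ exists t, [/\ box N t, close N (g t) y t & d <= g t].
Proof.
move=> g0.
have [[d d0] gaugeP] := Compactness.compactness_value N (tuple_of_fun N (fun _ => 0))
   (tuple_of_fun N (fun _ => 1)) (fun t => mkposreal (g (fun_of_tuple N t)) (g0 _)).
exists d => // y yB noT; apply: (gaugeP (tuple_of_fun N y)).
  by apply/bounded_nE => i iN; rewrite tuple_of_funK //; apply: yB.
case=> t [/bounded_nE tB [/close_nE ytB dt]]; apply: noT; exists (fun_of_tuple N t).
by split => // i iN; rewrite -(tuple_of_funK y iN); apply: ytB.
Qed.

Lemma box_continuous_at_all N F x : box_continuous N F -> box N x ->
  forall eps, 0 < eps -> exists2 d, 0 < d & forall y, box N y -> close N d x y ->
    forall i, (i < N)%N -> Rabs (F x i - F y i) < eps.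
Proof.
move=> Fc xB eps eps0.
suff /(_ N (leqnn N)) : forall M, (M <= N)%N -> exists2 d, 0 < d & forall y, box N y ->
    close N d x y -> forall i, (i < M)%N -> Rabs (F x i - F y i) < eps by [].
elim=> [|M IH] MN; first by exists 1 => //; lra.
have [d1 d10 d1P] := IH (ltnW MN).
have [d2 d20 d2P] := Fc M MN x xB eps eps0.
exists (Rmin d1 d2) => [|y yB cxy i]; first exact: Rmin_glb_lt.
rewrite ltnS leq_eqVlt => /orP[/eqP ->|iM]; first exact: d2P yB (close_le (Rmin_r _ _) cxy).
exact: d1P yB (close_le (Rmin_l _ _) cxy) i iM.
Qed.

Lemma box_continuous_uniform N F : box_continuous N F ->
  forall eps, 0 < eps -> exists2 d, 0 < d & forall y z, box N y -> box N z ->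
    close N d y z -> forall i, (i < N)%N -> Rabs (F y i - F z i) < eps.
Proof.
move=> Fc eps eps0.
pose P t d := 0 < d /\ (box N t -> forall y, box N y -> close N d t y ->
    forall i, (i < N)%N -> Rabs (F t i - F y i) < eps / 2).
pose g t := epsilon (inhabits 1) (P t).
have gP t : P t (g t).
  apply: epsilon_spec; have [tB|tNB] := classic (box N t); last by exists 1; split => //; lra.
  by have [d d0 dP] := box_continuous_at_all Fc tB (eps:=eps / 2) ltac:(lra); exists d.
have [d d0 dP] := @box_gauge N (fun t => g t / 2) (fun t => ltac:(have := (gP t).1; lra)).
exists d => // y z yB zB cyz i iN.
apply: NNPP => far; apply: (dP y yB) => -[t [tB cyt dt]]; apply: far.
have [_ gtP] := gP t.
have cty : close N (g t) t y by apply: close_sym; apply: close_le cyt; have := (gP t).1; lra.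
have ctz : close N (g t) t z.
  move=> k kN; have := cyt k kN; have := cyz k kN; have := Rabs_triang (t k - y k) (y k - z k).
  by rewrite (Rabs_minus_sym (y k) (t k)) (_ : t k - y k + (y k - z k) = t k - z k); [lra|ring].
have := gtP tB y yB cty i iN; have := gtP tB z zB ctz i iN.
have := Rabs_triang (F y i - F t i) (F t i - F z i).
rewrite (Rabs_minus_sym (F y i)) (_ : F y i - F t i + (F t i - F z i) = F y i - F z i); last ring.
lra.
Qed.

Section ApproximateFixedPoint.
Variables (N m : nat) (F : (nat -> R) -> nat -> R).
Hypotheses (m0 : (0 < m)%N) (F_box : forall x, box N x -> box N (F x)).

Definition grid_point (g : seq nat) i := INR (nth 0%N g i) / INR m.

Definition decreasing_coord g i :=
  (if Rlt_dec (F (grid_point g) i) (grid_point g i) then true else false) || (nth 0%N g i == m).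

Definition fixed_point_label g := find (decreasing_coord g) (iota 0 N).

Let INRm0 : 0 < INR m := lt_0_INR _ (elimT ltP m0).

Lemma grid_point_box g : on_grid N m g -> box N (grid_point g).
Proof.
case/andP => /eqP sg /allP gm i iN; have := gm (nth 0%N g i) (mem_nth _ _); rewrite sg => /(_ iN).
move/leP/le_INR => gim; split.
  exact/Rmult_le_pos/Rlt_le/Rinv_0_lt_compat/INRm0/pos_INR.
by apply: (Rmult_le_reg_r (INR m)) => //; rewrite /Rdiv Rmult_assoc Rinv_l; lra.
Qed.

Lemma decreasing_fixed_point_label g i :
  (i < N)%N -> fixed_point_label g = i -> decreasing_coord g i.
Proof.
move=> iN gi; have : has (decreasing_coord g) (iota 0 N).
  by rewrite has_find size_iota -/(fixed_point_label g) gi.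
by move/(nth_find 0%N); rewrite -/(fixed_point_label g) gi nth_iota.
Qed.

Lemma before_fixed_point_label g i :
  (i < fixed_point_label g)%N -> decreasing_coord g i = false.
Proof.
move=> ig; have := before_find 0%N ig; rewrite nth_iota //.
by apply: leq_trans ig _; rewrite -[X in (_ <= X)%N](size_iota 0 N) find_size.
Qed.

Lemma sperner_fixed_point_label : sperner_labelling N m fixed_point_label.
Proof.
split=> [g _|g i gg iN gi0|g i gg iN gim].
- by rewrite -[X in (_ <= X)%N](size_iota 0 N) find_size.
- apply/eqP => /(decreasing_fixed_point_label iN); rewrite /decreasing_coord gi0.
  rewrite (_ : grid_point g i = 0); last by rewrite /grid_point gi0 /Rdiv Rmult_0_l.
  have := F_box (grid_point_box gg) iN.
  case: Rlt_dec => [Flt|_] FB /=; first lra.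
  by move/eqP => m_eq0; move: m0; rewrite -m_eq0.
- rewrite leqNgt; apply/negP => /before_fixed_point_label.
  by rewrite /decreasing_coord gim eqxx orbT.
Qed.

Lemma grid_point_kuhn_vertex_close b p j j' i : (i < N)%N ->
  Rabs (grid_point (kuhn_vertex N b p j) i - grid_point (kuhn_vertex N b p j') i) <= / INR m.
Proof.
move=> iN; rewrite /grid_point !nth_kuhn_vertex // /Rdiv -Rmult_minus_distr_r Rabs_mult.
rewrite (Rabs_right (/ INR m)); last by apply/Rle_ge/Rlt_le/Rinv_0_lt_compat.
rewrite -[X in _ <= X]Rmult_1_l; apply: Rmult_le_compat_r; first exact/Rlt_le/Rinv_0_lt_compat.
by rewrite !plus_INR; apply: Rabs_le; case: (_ < j)%N; case: (_ < j')%N => /=; lra.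
Qed.

End ApproximateFixedPoint.

Lemma approximate_fixed_point N F : (forall x, box N x -> box N (F x)) -> box_continuous N F ->
  forall eps, 0 < eps -> exists2 x, box N x & forall i, (i < N)%N -> Rabs (F x i - x i) < eps.
Proof.
move=> F_box Fc eps eps0.
have [d d0 dP] := box_continuous_uniform Fc (eps:=eps / 2) ltac:(lra).
have c0 : 0 < Rmin d (eps / 2) by apply: Rmin_glb_lt; lra.
have [m mc] := INR_archimed _ 1 c0.
have m0 : (0 < m)%N by case: m mc => [|m] //=; lra.
have INRm0 : 0 < INR m by apply/lt_0_INR/ltP.
have im : / INR m < Rmin d (eps / 2).
  by apply: (Rmult_lt_reg_l (INR m)) => //; rewrite Rinv_r; lra.
have [b [p [bc _ labP]]] := sperner m0 (sperner_fixed_point_label m0 F_box).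
have [jN _ ljN] := labP N (leqnn N); set u := kuhn_vertex N b p jN.
have uB : box N (grid_point m u) by apply/grid_point_box/kuhn_vertex_on_grid.
exists (grid_point m u) => // i iN.
have Fu : grid_point m u i <= F (grid_point m u) i.
  have := @before_fixed_point_label N m F u i; rewrite ljN => /(_ iN).
  by rewrite /decreasing_coord; case: Rlt_dec => [//|h _]; apply: Rnot_lt_le h.
have [ji _ lji] := labP i (ltnW iN); set w := kuhn_vertex N b p ji.
have wB : box N (grid_point m w) by apply/grid_point_box/kuhn_vertex_on_grid.
have Fw : F (grid_point m w) i <= grid_point m w i.
  have := decreasing_fixed_point_label iN lji; rewrite /decreasing_coord.
  case: Rlt_dec => /= [h _|_ /eqP wi]; first exact: Rlt_le h.
  have : grid_point m w i = 1 by rewrite /grid_point wi; field; lra.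
  by have := F_box _ wB i iN; lra.
have uw k : (k < N)%N -> Rabs (grid_point m u k - grid_point m w k) <= / INR m.
  exact: grid_point_kuhn_vertex_close.
have cuw : close N d (grid_point m u) (grid_point m w).
  by move=> k kN; have := uw k kN; have := Rmin_l d (eps / 2); lra.
have /Rabs_def2[Fuw _] := dP _ _ uB wB cuw i iN.
rewrite Rabs_right; last lra.
have := Rle_abs (grid_point m w i - grid_point m u i); rewrite Rabs_minus_sym.
by have := uw i iN; have := Rmin_r d (eps / 2); lra.
Qed.

(* Around a point [t] of the cube that is not fixed, some coordinate [i] keeps
   [F] away from the identity on a neighbourhood of [t]; compactness makes the
   radii of these neighbourhoods uniform, contradicting approximate fixed points. *)
Theorem brouwer N F : (forall x, box N x -> box N (F x)) -> box_continuous N F ->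
  exists2 x, box N x & forall i, (i < N)%N -> F x i = x i.
Proof.
move=> F_box Fc; apply: NNPP => noFix.
pose P t d := 0 < d /\ (box N t -> exists2 i, (i < N)%N &
  d <= Rabs (F t i - t i) / 3 /\ forall y, box N y -> close N d t y ->
    Rabs (F t i - F y i) < Rabs (F t i - t i) / 3).
pose g t := epsilon (inhabits 1) (P t).
have gP t : P t (g t).
  apply: epsilon_spec; have [tB|] := classic (box N t); last by exists 1; split => //; lra.
  have [i iN Fti] : exists2 i, (i < N)%N & F t i <> t i.
    apply: NNPP => allFix; apply: noFix; exists t => // i iN.
    by apply: NNPP => Fti; apply: allFix; exists i.
  have c0 : 0 < Rabs (F t i - t i) / 3 by have := Rabs_pos_lt (F t i - t i) ltac:(lra); lra.
  have [d d0 dP] := Fc i iN t tB _ c0; set c := Rabs _ / 3 in c0 dP *.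
  exists (Rmin d c); split=> [|_]; first exact: Rmin_glb_lt.
  exists i => //; split=> [|y yB cty]; first exact: Rmin_r.
  exact: dP yB (close_le (Rmin_l _ _) cty).
have [dd dd0 ddP] := @box_gauge N g (fun t => (gP t).1).
have [y yB Fy] := approximate_fixed_point F_box Fc dd0.
apply: (ddP y yB) => -[t [tB cyt ddt]].
have [_ /(_ tB) [i iN [gt tP]]] := gP t.
have := tP y yB (close_sym cyt); have := cyt i iN; have := Fy i iN.
have := Rabs_triang (F t i - F y i) (F y i - y i).
have := Rabs_triang (F t i - F y i + (F y i - y i)) (y i - t i).
by rewrite (_ : F t i - F y i + (F y i - y i) + (y i - t i) = F t i - t i); [lra|ring].
Qed.

Section BoxContinuity.
Variable N : nat.
Implicit Types (f g : (nat -> R) -> R) (x : nat -> R).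

Lemma bcont_cst c x : box_continuous_at N (fun=> c) x.
Proof. by move=> eps eps0; exists 1 => [|y _ _]; rewrite ?Rminus_diag ?Rabs_R0; lra. Qed.

Lemma bcont_coord i x : (i < N)%N -> box_continuous_at N (fun y => y i) x.
Proof. by move=> iN eps eps0; exists eps => // y _ /(_ i iN). Qed.

Lemma bcont_pair f g x : box_continuous_at N f x -> box_continuous_at N g x ->
  forall e, 0 < e -> exists2 d, 0 < d & forall y, box N y -> close N d x y ->
    Rabs (f x - f y) < e /\ Rabs (g x - g y) < e.
Proof.
move=> fc gc e e0; have [d1 d10 d1P] := fc e e0; have [d2 d20 d2P] := gc e e0.
exists (Rmin d1 d2) => [|y yB cxy]; first exact: Rmin_glb_lt.
split; [apply: d1P yB (close_le (Rmin_l _ _) cxy)|apply: d2P yB (close_le (Rmin_r _ _) cxy)].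
Qed.

Lemma bcontD f g x : box_continuous_at N f x -> box_continuous_at N g x ->
  box_continuous_at N (fun y => f y + g y) x.
Proof.
move=> fc gc eps eps0; have [d d0 dP] := bcont_pair fc gc (e:=eps / 2) ltac:(lra).
exists d => // y yB cxy; have [fxy gxy] := dP y yB cxy.
have := Rabs_triang (f x - f y) (g x - g y).
by rewrite (_ : f x - f y + (g x - g y) = f x + g x - (f y + g y)); [lra|ring].
Qed.

Lemma bcontN f x : box_continuous_at N f x -> box_continuous_at N (fun y => - f y) x.
Proof.
move=> fc eps eps0; have [d d0 dP] := fc eps eps0; exists d => // y yB cxy.
rewrite (_ : - f x - - f y = - (f x - f y)); last ring.
by rewrite Rabs_Ropp; apply: dP.
Qed.

Lemma bcontB f g x : box_continuous_at N f x -> box_continuous_at N g x ->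
  box_continuous_at N (fun y => f y - g y) x.
Proof. by move=> fc gc; apply: bcontD fc (bcontN gc). Qed.

Lemma bcontM f g x : box_continuous_at N f x -> box_continuous_at N g x ->
  box_continuous_at N (fun y => f y * g y) x.
Proof.
move=> fc gc eps eps0; set A := Rabs (f x) + Rabs (g x) + 1.
have A0 : 0 < A by rewrite /A; have := Rabs_pos (f x); have := Rabs_pos (g x); lra.
set e := Rmin 1 (eps / (2 * A)).
have e0 : 0 < e by apply: Rmin_glb_lt; [lra|apply: Rdiv_lt_0_compat; lra].
have e1 : e <= 1 by apply: Rmin_l.
have eA : e * (2 * A) <= eps.
  have : e * (2 * A) <= eps / (2 * A) * (2 * A) by apply: Rmult_le_compat_r; [lra|apply: Rmin_r].
  by rewrite /Rdiv Rmult_assoc Rinv_l; lra.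
have [d d0 dP] := bcont_pair fc gc e0.
exists d => // y yB cxy; have [fxy gxy] := dP y yB cxy.
rewrite (_ : f x * g x - f y * g y = (f x - f y) * g y + f x * (g x - g y)); last ring.
apply: Rle_lt_trans (Rabs_triang _ _) _; rewrite !Rabs_mult.
have gy : Rabs (g y) <= Rabs (g x) + 1.
  by have := Rabs_triang_inv (g y) (g x); rewrite Rabs_minus_sym; lra.
have t1 : Rabs (f x - f y) * Rabs (g y) <= e * (Rabs (g x) + 1).
  by apply: Rmult_le_compat; try exact: Rabs_pos; lra.
have t2 : Rabs (f x) * Rabs (g x - g y) <= Rabs (f x) * e.
  by apply: Rmult_le_compat_l; [exact: Rabs_pos|lra].
have : e * (Rabs (g x) + 1) + Rabs (f x) * e < e * (2 * A).
  by have := Rmult_lt_0_compat _ _ e0 A0; rewrite /A; lra.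
lra.
Qed.

Lemma bcontV g x : g x <> 0 -> box_continuous_at N g x -> box_continuous_at N (fun y => / g y) x.
Proof.
move=> gx0 gc eps eps0; set a := Rabs (g x).
have a0 : 0 < a by apply: Rabs_pos_lt.
set e := Rmin (a / 2) (eps * (a * a) / 2).
have e0 : 0 < e.
  by apply: Rmin_glb_lt; have := Rmult_lt_0_compat _ _ eps0 (Rmult_lt_0_compat _ _ a0 a0); lra.
have [d d0 dP] := gc e e0; exists d => // y yB cxy; have gxy := dP y yB cxy.
have ea : e <= a / 2 by apply: Rmin_l.
have eb : e <= eps * (a * a) / 2 by apply: Rmin_r.
have gy : a / 2 < Rabs (g y) by have := Rabs_triang_inv (g x) (g y); rewrite -/a; lra.
have gy0 : g y <> 0 by move=> gy0; rewrite gy0 Rabs_R0 in gy; lra.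
rewrite (_ : / g x - / g y = (g y - g x) / (g x * g y)); last by field.
rewrite /Rdiv Rabs_mult Rabs_inv Rabs_mult -/a Rabs_minus_sym.
have ay : 0 < a * Rabs (g y) by nra.
apply: (Rmult_lt_reg_r (a * Rabs (g y))) => //.
rewrite Rmult_assoc Rinv_l ?Rmult_1_r; nra.
Qed.

Lemma bcont_min f g x : box_continuous_at N f x -> box_continuous_at N g x ->
  box_continuous_at N (fun y => Rmin (f y) (g y)) x.
Proof.
move=> fc gc eps eps0; have [d d0 dP] := bcont_pair fc gc eps0.
exists d => // y yB cxy; have [/Rabs_def2[? ?] /Rabs_def2[? ?]] := dP y yB cxy.
by apply: Rabs_def1; rewrite /Rmin; do 2 case: Rle_dec; lra.
Qed.

Lemma bcont_max f g x : box_continuous_at N f x -> box_continuous_at N g x ->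
  box_continuous_at N (fun y => Rmax (f y) (g y)) x.
Proof.
move=> fc gc eps eps0; have [d d0 dP] := bcont_pair fc gc eps0.
exists d => // y yB cxy; have [/Rabs_def2[? ?] /Rabs_def2[? ?]] := dP y yB cxy.
by apply: Rabs_def1; rewrite /Rmax; do 2 case: Rle_dec; lra.
Qed.

Lemma bcont_sumR (A : Type) (f : (nat -> R) -> A -> R) (l : list A) x :
  (forall k, List.In k l -> box_continuous_at N (fun y => f y k) x) ->
  box_continuous_at N (fun y => sumR (f y) l) x.
Proof.
elim: l => [|k l IH] fc /=; first exact: bcont_cst.
by apply: bcontD; [apply: fc; left|apply: IH => k' kl; apply: fc; right].
Qed.

Lemma bcont_near f g x r : 0 < r ->
  (forall y, box N y -> close N r x y -> f y = g y) -> f x = g x ->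
  box_continuous_at N g x -> box_continuous_at N f x.
Proof.
move=> r0 fg fgx gc eps eps0; have [d d0 dP] := gc eps eps0.
exists (Rmin d r) => [|y yB cxy]; first exact: Rmin_glb_lt.
rewrite fgx fg //; last exact: close_le (Rmin_r _ _) cxy.
exact: dP yB (close_le (Rmin_l _ _) cxy).
Qed.

End BoxContinuity.

(** * Clearing vectors *)

Lemma sumR_ge0 (A : Type) (f : A -> R) l : (forall k, List.In k l -> 0 <= f k) -> 0 <= sumR f l.
Proof.
elim: l => [|k l IH] /= f0; first lra.
by have := f0 k (or_introl erefl); have := IH (fun z h => f0 z (or_intror h)); lra.
Qed.

Lemma sumR_le (A : Type) (f g : A -> R) l : (forall k, List.In k l -> f k <= g k) ->
  sumR f l <= sumR g l.
Proof.
elim: l => [|k l IH] /= fg; first lra.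
by have := fg k (or_introl erefl); have := IH (fun z h => fg z (or_intror h)); lra.
Qed.

Lemma eq_in_sumR (A : Type) (f g : A -> R) l : (forall k, List.In k l -> f k = g k) ->
  sumR f l = sumR g l.
Proof. by elim: l => [|k l IH] //= fg; rewrite fg ?IH //; [move=> z h; apply: fg; right|left]. Qed.

Lemma sumR_ge_term (A : Type) (f : A -> R) l k : List.In k l ->
  (forall z, List.In z l -> 0 <= f z) -> f k <= sumR f l.
Proof.
elim: l => [|z l IH] //= [->|kl] f0.
  by have := sumR_ge0 (fun z h => f0 z (or_intror h)); lra.
by have := IH kl (fun z h => f0 z (or_intror h)); have := f0 z (or_introl erefl); lra.
Qed.

Lemma Rmin1_div_mul a l : 0 < l -> Rmin 1 (a / l) * l = Rmin l a.
Proof.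
move=> l0; rewrite [in RHS](_ : a = a / l * l); last by field; lra.
by set q := a / l; rewrite /Rmin; do 2 case: Rle_dec; nra.
Qed.

(* The payment on contract [k] when each debtor [v] pays out the amount [y v] in
   total; [payment FS r] is the case [y v = r v * liab_bank FS r v]. *)
Definition payment_with (FS : system) (r y : nat -> R) (k : contract) : R :=
  let v := debtor k in
  match Req_EM_T (liab_prio FS r v (prio k)) 0 with
  | left _ => 0
  | right _ => liab r k *
      Rmin 1 (Rmax 0 ((y v - liab_le FS r v (Nat.sub (prio k) 1)) / liab_prio FS r v (prio k)))
  end.

Definition assets_with (FS : system) (r y : nat -> R) (v : nat) : R :=
  ext FS v + sumR (payment_with FS r y) (filter (fun k => Nat.eqb (creditor k) v) (contracts FS)).

Lemma assets_withE FS r : assets FS r = assets_with FS r (fun v => r v * liab_bank FS r v).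
Proof. by []. Qed.

Section FinancialSystem.
Variable FS : system.
Hypothesis wf : well_formed FS.

Local Notation n := (nbanks FS).
Local Notation cs := (contracts FS).

Lemma wf_contract k : List.In k cs ->
  [/\ (debtor k < n)%N, 0 < weight k & forall w, kind k = CDS w -> (w < n)%N].
Proof.
case: wf => _ [_ [wfc _]] kin; have [dn [_ [_ [w0 [_ wCDS]]]]] := wfc k kin.
by split => [||w /wCDS[/ltP]] //; apply/ltP.
Qed.

Lemma wf_ext v : (v < n)%N -> 0 <= ext FS v.
Proof. by case: wf => _ [e0 _] /ltP; apply: e0. Qed.

Definition debtor_contracts v := filter (fun k => Nat.eqb (debtor k) v) cs.

Definition creditor_contracts v := filter (fun k => Nat.eqb (creditor k) v) cs.

Definition debts v :=
  sumR (fun k => if kind k is Debt then weight k else 0) (debtor_contracts v).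

Definition cap v := sumR weight (debtor_contracts v).

Lemma in_debtor_contracts k v : List.In k (debtor_contracts v) -> List.In k cs.
Proof. by rewrite List.filter_In => -[]. Qed.

Lemma in_creditor_contracts k v : List.In k (creditor_contracts v) -> List.In k cs.
Proof. by rewrite List.filter_In => -[]. Qed.

Lemma debts_ge0 v : 0 <= debts v.
Proof.
apply: sumR_ge0 => k /in_debtor_contracts /wf_contract[_ w0 _].
by case: (kind k) => [|?]; lra.
Qed.

Lemma debts_reference_gt0 k w : List.In k cs -> kind k = CDS w -> 0 < debts w.
Proof.
case: wf => _ [_ [_ refDebt]] kin kw.
have [k' [k'in [k'd [k'w k'0]]]] := refDebt k w kin kw.
have k'l : List.In k' (debtor_contracts w) by rewrite List.filter_In Nat.eqb_eq.
apply: Rlt_le_trans (sumR_ge_term k'l _); first by rewrite k'd.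
by move=> z /in_debtor_contracts /wf_contract[_ z0 _]; case: (kind z) => [|?]; lra.
Qed.

Lemma liab_bounds x k : box n x -> List.In k cs ->
  [/\ 0 <= liab x k, liab x k <= weight k &
      (if kind k is Debt then weight k else 0) <= liab x k].
Proof.
move=> xB /wf_contract[_ w0 wn]; rewrite /liab.
case kw: (kind k) => [|w]; first by split; lra.
by have := xB w (wn w kw); split; nra.
Qed.

Lemma liab_bank_bounds x v : box n x -> debts v <= liab_bank FS x v <= cap v.
Proof.
by move=> xB; split; apply: sumR_le => k /in_debtor_contracts kin; case: (liab_bounds xB kin).
Qed.

Lemma cap_ge0 v : 0 <= cap v.
Proof. by apply: sumR_ge0 => k /in_debtor_contracts /wf_contract[_ ? _]; lra. Qed.

Lemma liab_prio_ge0 x v rho : box n x -> 0 <= liab_prio FS x v rho.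
Proof. by move=> xB; apply: sumR_ge0 => k /List.filter_In[kin _]; case: (liab_bounds xB kin). Qed.

Lemma liab_le_liab_prio x k : box n x -> List.In k cs ->
  liab x k <= liab_prio FS x (debtor k) (prio k).
Proof.
move=> xB kin; apply: sumR_ge_term; first by rewrite List.filter_In !Nat.eqb_refl.
by move=> z /List.filter_In[zin _]; case: (liab_bounds xB zin).
Qed.

Lemma payment_with_bounds x y k : box n x -> List.In k cs ->
  0 <= payment_with FS x y k <= liab x k.
Proof.
move=> xB kin; have [l0 _ _] := liab_bounds xB kin; rewrite /payment_with.
case: Req_EM_T => _; first lra.
set c := Rmin 1 _; have : 0 <= c <= 1 by rewrite /c /Rmin /Rmax; do 2 case: Rle_dec; lra.
nra.
Qed.

Lemma assets_with_ge0 x y v : box n x -> (v < n)%N -> 0 <= assets_with FS x y v.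
Proof.
move=> xB vn; have := wf_ext vn; rewrite /assets_with -/(creditor_contracts v).
have : 0 <= sumR (payment_with FS x y) (creditor_contracts v).
  by apply: sumR_ge0 => k /in_creditor_contracts kin; case: (payment_with_bounds y xB kin).
lra.
Qed.

(* Coordinate [v] of the fixed-point problem is the recovery rate of [v] when [v]
   owes some debt. Otherwise the liabilities of [v] may vanish, and the coordinate is
   the fraction of [cap v] that [v] pays out. Liabilities only involve the rates of
   banks owing debts, since every reference entity does. *)
Definition payout x v := x v * (if Rlt_dec 0 (debts v) then liab_bank FS x v else cap v).

Definition clearing_map x v :=
  let a := assets_with FS x (payout x) v in
  if Rlt_dec 0 (debts v) then Rmin 1 (a / liab_bank FS x v)
  else if Rlt_dec 0 (cap v) then Rmin (liab_bank FS x v) a / cap v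
  else 0.

Lemma clearing_map_box x : box n x -> box n (clearing_map x).
Proof.
move=> xB v vn; have a0 := assets_with_ge0 (payout x) xB vn.
have [lD lC] := liab_bank_bounds v xB; rewrite /clearing_map.
set a := assets_with _ _ _ _ in a0 *; set l := liab_bank _ _ _ in lD lC *.
case: (Rlt_dec 0 (debts v)) => [D0|nD0] /=.
  have : 0 <= a / l by apply/Rmult_le_pos/Rlt_le/Rinv_0_lt_compat => //; lra.
  by rewrite /Rmin; case: Rle_dec; lra.
case: (Rlt_dec 0 (cap v)) => [C0|nC0] /=; last lra.
have m0 : 0 <= Rmin l a by have := debts_ge0 v; rewrite /Rmin; case: Rle_dec; lra.
have mC : Rmin l a <= cap v by rewrite /Rmin; case: Rle_dec; lra.
split; first exact/Rmult_le_pos/Rlt_le/Rinv_0_lt_compat.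
by apply: (Rmult_le_reg_r (cap v)) => //; rewrite /Rdiv Rmult_assoc Rinv_l; lra.
Qed.

Lemma bcont_liab k x : List.In k cs -> box_continuous_at n (fun y => liab y k) x.
Proof.
move=> /wf_contract[_ _ wn]; rewrite /liab; case kw: (kind k) => [|w].
  exact: bcont_cst.
by apply/bcontM/bcontB/bcont_coord/wn/kw; apply: bcont_cst.
Qed.

Lemma bcont_liab_prio v rho x : box_continuous_at n (fun y => liab_prio FS y v rho) x.
Proof. by apply: bcont_sumR => k /List.filter_In[kin _]; apply: bcont_liab. Qed.

Lemma bcont_liab_bank v x : box_continuous_at n (fun y => liab_bank FS y v) x.
Proof. by apply: bcont_sumR => k /in_debtor_contracts; apply: bcont_liab. Qed.

Lemma bcont_liab_le v rho x : box_continuous_at n (fun y => liab_le FS y v rho) x.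
Proof. by elim: rho => [|rho IH] /=; [apply: bcont_cst|apply/bcontD/bcont_liab_prio]. Qed.

Lemma bcont_payout v x : (v < n)%N -> box_continuous_at n (fun y => payout y v) x.
Proof.
move=> vn; apply: bcontM (bcont_coord _ vn) _.
by case: (Rlt_dec 0 (debts v)) => D0; [apply: bcont_liab_bank|apply: bcont_cst].
Qed.

Lemma bcont_payment_with k x : box n x -> List.In k cs ->
  box_continuous_at n (fun y => payment_with FS y (payout y) k) x.
Proof.
move=> xB kin; have [dn _ _] := wf_contract kin.
have Lc := bcont_liab_prio (debtor k) (prio k) x.
have [L0|L0] := Req_EM_T (liab_prio FS x (debtor k) (prio k)) 0.
  have px0 : payment_with FS x (payout x) k = 0.
    by rewrite /payment_with; case: Req_EM_T => // /(_ L0).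
  move=> eps eps0; have [d d0 dP] := Lc eps eps0; exists d => // y yB cxy.
  have := dP y yB cxy; rewrite L0 px0 !Rminus_0_l !Rabs_Ropp => Ly.
  have [py0 pyL] := payment_with_bounds (payout y) yB kin; have := liab_le_liab_prio yB kin.
  by rewrite Rabs_right; have := Rle_abs (liab_prio FS y (debtor k) (prio k)); lra.
have Lx0 : 0 < liab_prio FS x (debtor k) (prio k).
  by have := liab_prio_ge0 (debtor k) (prio k) xB; lra.
have [r r0 rP] := Lc (liab_prio FS x (debtor k) (prio k) / 2) ltac:(lra).
apply: (bcont_near (g := fun y => liab y k * Rmin 1 (Rmax 0
    ((payout y (debtor k) - liab_le FS y (debtor k) (Nat.sub (prio k) 1)) *
      / liab_prio FS y (debtor k) (prio k))))) r0 _ _ _.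
- move=> y yB cxy; rewrite /payment_with; case: Req_EM_T => // Ly0.
  by have := rP y yB cxy; rewrite Ly0 => /Rabs_def2; lra.
- by rewrite /payment_with; case: Req_EM_T.
apply/bcontM/bcont_min/bcont_max/bcontM; first exact: bcont_liab.
- exact: bcont_cst.
- exact: bcont_cst.
- by apply: bcontB; [apply: bcont_payout|apply: bcont_liab_le].
exact: bcontV.
Qed.

Lemma bcont_assets_with v x : box n x ->
  box_continuous_at n (fun y => assets_with FS y (payout y) v) x.
Proof.
move=> xB; apply/bcontD/bcont_sumR; first exact: bcont_cst.
by move=> k /in_creditor_contracts; apply: bcont_payment_with.
Qed.

Lemma clearing_map_continuous : box_continuous n clearing_map.
Proof.
move=> v vn x xB; rewrite /clearing_map.
case: (Rlt_dec 0 (debts v)) => [D0|nD0] /=.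
  apply/bcont_min/bcontM; [exact: bcont_cst|exact: bcont_assets_with|].
  by apply: bcontV; [have := liab_bank_bounds v xB; lra|apply: bcont_liab_bank].
case: (Rlt_dec 0 (cap v)) => [C0|nC0] /=; last exact: bcont_cst.
apply/bcontM/bcont_cst/bcont_min; [apply: bcont_liab_bank|exact: bcont_assets_with].
Qed.

Lemma payment_with_out r y y' k : y (debtor k) = y' (debtor k) ->
  payment_with FS r y k = payment_with FS r y' k.
Proof. by rewrite /payment_with => ->. Qed.

Lemma is_solution_of_payout r : box n r ->
  (forall v, (v < n)%N -> r v * liab_bank FS r v = Rmin (liab_bank FS r v) (assets FS r v)) ->
  (forall v, (v < n)%N -> liab_bank FS r v = 0 -> r v = 1) -> is_solution FS r.
Proof.
move=> rB payE l0E v /ltP vn; split; first exact: rB.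
have l0 : 0 <= liab_bank FS r v by have := liab_bank_bounds v rB; have := debts_ge0 v; lra.
have a0 : 0 <= assets FS r v by rewrite assets_withE; apply: assets_with_ge0.
have := payE v vn; rewrite /Rmin; case: Rle_dec => la rl; split => [ge|lt]; try lra.
- have [l00|lpos] := Req_dec (liab_bank FS r v) 0; first exact: l0E.
  by apply: (Rmult_eq_reg_r (liab_bank FS r v)); lra.
- by rewrite -rl; field; lra.
Qed.

Definition recovery x v :=
  if Rlt_dec 0 (debts v) then x v
  else if Rlt_dec 0 (liab_bank FS x v) then payout x v / liab_bank FS x v else 1.

Lemma liab_recovery x k : List.In k cs -> liab (recovery x) k = liab x k.
Proof.
move=> kin; rewrite /liab; case kw: (kind k) => [|w] //.
by rewrite /recovery; case: Rlt_dec => // nD; case: (nD (debts_reference_gt0 kin kw)).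
Qed.

Lemma liab_bank_recovery x v : liab_bank FS (recovery x) v = liab_bank FS x v.
Proof. by apply: eq_in_sumR => k /in_debtor_contracts; apply: liab_recovery. Qed.

Lemma liab_prio_recovery x v rho : liab_prio FS (recovery x) v rho = liab_prio FS x v rho.
Proof. by apply: eq_in_sumR => k /List.filter_In[kin _]; apply: liab_recovery. Qed.

Lemma liab_le_recovery x v rho : liab_le FS (recovery x) v rho = liab_le FS x v rho.
Proof. by elim: rho => [|rho IH] //=; rewrite IH liab_prio_recovery. Qed.

Lemma payment_with_recovery x y k : List.In k cs ->
  payment_with FS (recovery x) y k = payment_with FS x y k.
Proof. by move=> kin; rewrite /payment_with !liab_prio_recovery liab_le_recovery liab_recovery. Qed.

Section FixedPoint.
Variable x : nat -> R.
Hypotheses (xB : box n x) (xfix : forall v, (v < n)%N -> clearing_map x v = x v).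

Lemma payout_fixed v : (v < n)%N ->
  payout x v = Rmin (liab_bank FS x v) (assets_with FS x (payout x) v).
Proof.
move=> vn; have a0 := assets_with_ge0 (payout x) xB vn.
have [lD lC] := liab_bank_bounds v xB; have D0 := debts_ge0 v.
rewrite {1}/payout -{1}(xfix vn) /clearing_map.
set a := assets_with _ _ _ _ in a0 *; set l := liab_bank _ _ _ in lD lC *.
case: (Rlt_dec 0 (debts v)) => [Dpos|Dn0] /=.
  by apply: Rmin1_div_mul; lra.
case: (Rlt_dec 0 (cap v)) => [Cpos|Cn0] /=; first by field; lra.
by rewrite Rmult_0_l /Rmin; have := cap_ge0 v; case: Rle_dec; lra.
Qed.

Lemma recovery_box : box n (recovery x).
Proof.
move=> v vn; rewrite /recovery; case: Rlt_dec => [_|_] /=; first exact: xB.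
case: Rlt_dec => [lpos|_] /=; last lra.
rewrite (payout_fixed vn); have a0 := assets_with_ge0 (payout x) xB vn.
set a := assets_with _ _ _ _ in a0 *; set l := liab_bank _ _ _ in lpos *.
split; first by apply/Rmult_le_pos/Rlt_le/Rinv_0_lt_compat; rewrite /Rmin; try case: Rle_dec; lra.
apply: (Rmult_le_reg_r l) => //; rewrite /Rdiv Rmult_assoc Rinv_l; last lra.
by rewrite /Rmin; case: Rle_dec; lra.
Qed.

Lemma recovery_payout v : (v < n)%N -> recovery x v * liab_bank FS (recovery x) v = payout x v.
Proof.
move=> vn; rewrite liab_bank_recovery /recovery.
case: (Rlt_dec 0 (debts v)) => [Dpos|Dn0] /=; first by rewrite /payout; case: Rlt_dec.
case: Rlt_dec => [lpos|ln0] /=; first by field; lra.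
have l0 : liab_bank FS x v = 0 by have := liab_bank_bounds v xB; have := debts_ge0 v; lra.
rewrite (payout_fixed vn) l0 Rmult_0_r /Rmin.
by case: Rle_dec => //; have := assets_with_ge0 (payout x) xB vn; lra.
Qed.

Lemma assets_recovery v : assets FS (recovery x) v = assets_with FS x (payout x) v.
Proof.
rewrite assets_withE /assets_with; congr Rplus; apply: eq_in_sumR => k /List.filter_In[kin _].
have [dn _ _] := wf_contract kin.
by rewrite -(payment_with_recovery x) //; apply: payment_with_out; apply: recovery_payout.
Qed.

Lemma recovery_solution : is_solution FS (recovery x).
Proof.
apply: is_solution_of_payout recovery_box _ _ => v vn.
  by rewrite recovery_payout // assets_recovery liab_bank_recovery payout_fixed.
rewrite liab_bank_recovery /recovery => l0.
have := liab_bank_bounds v xB; rewrite l0; case: Rlt_dec => [Dpos|_] /=; first lra.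
by case: Rlt_dec => // lt00; case: (Rlt_irrefl _ lt00).
Qed.

End FixedPoint.

End FinancialSystem.

Theorem mainTheorem1 (FS : system) :
  well_formed FS -> exists r : nat -> R, is_solution FS r.
Proof.
move=> wf; have [x xB xfix] := brouwer (clearing_map_box wf) (clearing_map_continuous wf).
by exists (recovery FS x); apply: recovery_solution.
Qed.
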